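(* Let $L$ be a complex Leibniz algebra, let $I$ be the ideal of $L$ generated by all squares $[x,x]$, $x\in L$, and suppose that $L/I\cong\mathfrak{e}(2)$ and that $I$, regarded as a right $\mathfrak{e}(2)$-module via $(i,x+I)\mapsto[i,x]$, is isomorphic to the four-dimensional module $V$ with basis $X_1,X_2,X_3,X_4$ and action $(X_1,p_+)=X_2$, $(X_3,p_-)=X_4$, $(X_1,l)=\tfrac12X_1$, $(X_2,l)=-\tfrac12X_2$, $(X_3,l)=-\tfrac12X_3$, $(X_4,l)=\tfrac12X_4$ (all other products of basis elements of $V$ with $l,p_+,p_-$ being zero). Then there exists a basis $\{l,p_+,p_-,X_1,X_2,X_3,X_4\}$ of $L$ (with $X_1,\dots,X_4\in I$ and $l,p_+,p_-$ mapping to the corresponding basis elements of $\mathfrak{e}(2)$) in which the only nonzero products are $[l,p_+]=p_+$, $[p_+,l]=-p_+$, $[l,p_-]=-p_-$, $[p_-,l]=p_-$, $[X_1,p_+]=X_2$, $[X_3,p_-]=X_4$, $[X_1,l]=\tfrac12X_1$, $[X_2,l]=-\tfrac12X_2$, $[X_3,l]=-\tfrac12X_3$, $[X_4,l]=\tfrac12X_4$.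
   Context: A (right) Leibniz algebra is a vector space $L$ with a bilinear bracket satisfying $[[x,y],z]=[[x,z],y]+[x,[y,z]]$ for all $x,y,z\in L$. The ideal $I$ generated by the squares satisfies $[L,I]=0$, so $L/I$ is a Lie algebra and $I$ is a right $L/I$-module via $(i,x+I)\mapsto[i,x]$. Here $\mathfrak{e}(2)$ denotes the complex (complexified Euclidean) Lie algebra with basis $\{l,p_+,p_-\}$ and brackets $[l,p_+]=p_+$, $[l,p_-]=-p_-$, $[p_+,p_-]=0$. A right module $V$ over a Lie algebra $\mathfrak g$ satisfies $((v,x),y)-((v,y),x)=(v,[x,y])$. *)

From HB Require Import structures.
From mathcomp Require Import all_boot all_order all_algebra.
From mathcomp Require Import complex reals.
Set Implicit Arguments. Unset Strict Implicit. Unset Printing Implicit Defensive.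
Import Order.TTheory GRing.Theory Num.Theory.
Local Open Scope ring_scope.

Section Defs.
Variable C : fieldType.
Variable L : lmodType C.
Implicit Types (br : L -> L -> L).

Definition bilinear_br br : Prop :=
  (forall (a : C) (x y z : L), br (a *: x + y) z = a *: br x z + br y z) /\
  (forall (a : C) (x y z : L), br z (a *: x + y) = a *: br z x + br z y).

Definition right_leibniz br : Prop :=
  forall x y z : L, br (br x y) z = br (br x z) y + br x (br y z).

Definition is_ideal br (S : L -> Prop) : Prop :=
  [/\ S 0,
      (forall (a : C) (x y : L), S x -> S y -> S (a *: x + y)) &
      (forall s x : L, S s -> S (br s x) /\ S (br x s))].

Definition sq_ideal br (v : L) : Prop :=
  forall S : L -> Prop, is_ideal br S -> (forall x : L, S (br x x)) -> S v.

Definition is_basis n (b : 'I_n -> L) : Prop :=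
  forall v : L, exists! c : 'I_n -> C, v = \sum_(i < n) c i *: b i.
End Defs.

Section E2.
Variable C : fieldType.

(* e(2) = C^3 with basis e0 = l, e1 = p_+, e2 = p_-, coordinates a 0 (inord k) *)
Definition e2basis (k : nat) : 'rV[C]_3 :=
  \row_(j < 3) (if val j == k then 1 else 0).

Definition e2br (a b : 'rV[C]_3) : 'rV[C]_3 :=
  let a0 := a 0 (inord 0) in let a1 := a 0 (inord 1) in let a2 := a 0 (inord 2) in
  let b0 := b 0 (inord 0) in let b1 := b 0 (inord 1) in let b2 := b 0 (inord 2) in
  \row_(j < 3) (match val j with
                | 1 => a0 * b1 - a1 * b0
                | 2 => a2 * b0 - a0 * b2
                | _ => 0 end).

(* the right e(2)-module V = C^4 with basis X1..X4 (coordinates 0..3) *)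
Definition Vact (v : 'rV[C]_4) (a : 'rV[C]_3) : 'rV[C]_4 :=
  let a0 := a 0 (inord 0) in let a1 := a 0 (inord 1) in let a2 := a 0 (inord 2) in
  let v0 := v 0 (inord 0) in let v1 := v 0 (inord 1) in
  let v2 := v 0 (inord 2) in let v3 := v 0 (inord 3) in
  \row_(j < 4) (match val j with
                | 0 => a0 * 2^-1 * v0
                | 1 => - (a0 * 2^-1 * v1) + a1 * v0
                | 2 => - (a0 * 2^-1 * v2)
                | 3 => a0 * 2^-1 * v3 + a2 * v2
                | _ => 0 end).

(* multiplication table of the theorem, basis indices
   0 = l, 1 = p_+, 2 = p_-, 3 = X1, 4 = X2, 5 = X3, 6 = X4 *)
Definition leib_table (L : lmodType C) (b : 'I_7 -> L) (i j : 'I_7) : L :=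
  match val i, val j with
  | 0, 1 => b (inord 1)
  | 1, 0 => - b (inord 1)
  | 0, 2 => - b (inord 2)
  | 2, 0 => b (inord 2)
  | 3, 1 => b (inord 4)
  | 5, 2 => b (inord 6)
  | 3, 0 => 2^-1 *: b (inord 3)
  | 4, 0 => - (2^-1 *: b (inord 4))
  | 5, 0 => - (2^-1 *: b (inord 5))
  | 6, 0 => 2^-1 *: b (inord 6)
  | _, _ => 0
  end.
End E2.

From HB Require Import structures.
From mathcomp Require Import all_boot all_order all_algebra.
From mathcomp Require Import complex reals.
From mathcomp Require Import zify.
From Stdlib Require Import FunctionalExtensionality.
Set Implicit Arguments. Unset Strict Implicit. Unset Printing Implicit Defensive.
Import Order.TTheory GRing.Theory Num.Theory.
Local Open Scope ring_scope.

(* Squares generate an ideal I with [L, I] = 0, so right multiplication by any lift l of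
   the generator l of e(2) acts on I ~ V through the module action, diagonally with
   eigenvalues 1/2 and -1/2.  Being never an integer, these make R_l - k invertible on I
   for every integer k: an element that is an R_l-eigenvector of integer weight modulo I
   can be corrected by an element of I into a true eigenvector, and an element of I of
   integer weight is 0.  Correcting arbitrary lifts yields l, p_+, p_- of weights 0, -1, 1
   with [l, l] = 0.  By the Leibniz identity weights add under the bracket, so the
   difference between any bracket of two such lifts and its expected value lies in I and
   has integer weight, hence vanishes; the remaining products are those of V. *)

Section Leibniz.
Variables (C : fieldType) (L : lmodType C) (br : L -> L -> L).
Hypothesis br_bilin : bilinear_br br.

Lemma brDl x y z : br (x + y) z = br x z + br y z.
Proof. by have := br_bilin.1 1 x y z; rewrite !scale1r. Qed.

Lemma brDr x y z : br z (x + y) = br z x + br z y.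
Proof. by have := br_bilin.2 1 x y z; rewrite !scale1r. Qed.

Lemma br0l z : br 0 z = 0.
Proof. by apply/(addrI (br 0 z)); rewrite -brDl !addr0. Qed.

Lemma br0r z : br z 0 = 0.
Proof. by apply/(addrI (br z 0)); rewrite -brDr !addr0. Qed.

Lemma brZl a x z : br (a *: x) z = a *: br x z.
Proof. by rewrite -[a *: x]addr0 br_bilin.1 br0l addr0. Qed.

Lemma brZr a x z : br z (a *: x) = a *: br z x.
Proof. by rewrite -[a *: x]addr0 br_bilin.2 br0r addr0. Qed.

Lemma brNl x z : br (- x) z = - br x z.
Proof. by rewrite -scaleN1r brZl scaleN1r. Qed.

Lemma brBl x y z : br (x - y) z = br x z - br y z.
Proof. by rewrite brDl brNl. Qed.

Hypothesis br_leibniz : right_leibniz br.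

Lemma sq_ideal_annihilated x w : sq_ideal br w -> br x w = 0.
Proof.
move=> Iw; move: x; apply: (Iw (fun w => forall x, br x w = 0)) => [|y x]; last first.
  by apply/(addrI (br (br x y) y)); rewrite -br_leibniz addr0.
split=> [x | a y z y0 z0 x | s y s0]; first exact: br0r.
  by rewrite br_bilin.2 y0 z0 scaler0 addr0.
split=> x.
  by have := br_leibniz x s y; rewrite !s0 br0l add0r.
by have := br_leibniz x y s; rewrite !s0 br0l add0r => /esym.
Qed.

Lemma br_weight l x y s t :
  br x l = s *: x -> br y l = t *: y -> br (br x y) l = (s + t) *: br x y.
Proof. by move=> xl yl; rewrite br_leibniz xl yl brZl brZr scalerDl. Qed.

End Leibniz.

Section Char0.
Variable C : fieldType.
Hypothesis C0 : [pchar C] =i pred0.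

Lemma pchar0_intr_eq0 (z : int) : (z%:~R == 0 :> C) = (z == 0).
Proof. by case: z => n; rewrite ?NegzE ?intrN ?oppr_eq0 -?pmulrn (pcharf0P C).1. Qed.

Lemma half_neq_intr (k : int) : (2^-1 : C) != k%:~R.
Proof.
have two_neq0 : (2 : C) != 0 by rewrite (pcharf0P C).1.
apply/eqP=> half_k.
have /eqP : ((2 * k - 1)%:~R : C) = 0 by rewrite intrD intrM -half_k mulfV ?subrr.
rewrite pchar0_intr_eq0; lia.
Qed.

End Char0.

Section Bases.
Variable C : fieldType.

Lemma is_basis_delta n : is_basis (fun j : 'I_n => delta_mx (0 : 'I_1) j : 'rV[C]_n).
Proof.
move=> v; exists (fun j => v 0 j); split=> [|c vc]; first exact: row_sum_delta.
have -> : v = \row_j c j.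
  by rewrite vc [RHS]row_sum_delta; apply: eq_bigr => j _; rewrite mxE.
by apply: functional_extensionality => j; rewrite mxE.
Qed.

Definition unit_row n (k : nat) : 'rV[C]_n := \row_(j < n) (if val j == k then 1 else 0).

Lemma unit_row_delta n (i : 'I_n) : unit_row n i = delta_mx 0 i.
Proof. by apply/rowP => j; rewrite !mxE eqxx val_eqE; case: (j == i). Qed.

Lemma is_basis_unit_row n : is_basis (fun i : 'I_n => unit_row n i).
Proof.
have -> : (fun i : 'I_n => unit_row n i) = (fun i => delta_mx 0 i).
  by apply: functional_extensionality => i; rewrite unit_row_delta.
exact: is_basis_delta.
Qed.

End Bases.

Section ExtensionBasis.
Variables (C : fieldType) (L U W : lmodType C).
Variables (pi : {linear L -> W}) (phi : {linear U -> L}).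
Hypotheses (phi_inj : injective phi) (ker_pi : forall x, pi x = 0 <-> exists u, x = phi u).

Lemma is_basis_extension {n m} {b : 'I_(n + m) -> L} {g : 'I_m -> U} :
  is_basis (fun i => pi (b (lshift m i))) -> is_basis g ->
  (forall j, b (rshift n j) = phi (g j)) -> is_basis b.
Proof.
move=> piB gB bR v.
have pi_phi u : pi (phi u) = 0 by apply/ker_pi; exists u.
have [c [vc c_uniq]] := piB (pi v).
have [u vu] : exists u, v - \sum_i c i *: b (lshift m i) = phi u.
  apply/ker_pi; rewrite linearB linear_sum.
  by under eq_bigr do rewrite linearZZ; rewrite -vc subrr.
have [d [ud d_uniq]] := gB u.
have phi_sum (e : 'I_m -> C) : phi (\sum_j e j *: g j) = \sum_j e j *: b (rshift n j).
  by rewrite linear_sum; apply: eq_bigr => j _; rewrite linearZZ bR.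
exists (fun k => match split k with inl i => c i | inr j => d j end); split.
  rewrite big_split_ord /=.
  under eq_bigr do rewrite (unsplitK (inl _)).
  under [X in _ = _ + X]eq_bigr do rewrite (unsplitK (inr _)).
  by rewrite -phi_sum -ud -vu addrC subrK.
move=> c' vc'.
have pi_v : pi v = \sum_i c' (lshift m i) *: pi (b (lshift m i)).
  rewrite vc' big_split_ord linearD !linear_sum /=.
  rewrite [X in _ + X]big1 => [|j _]; last by rewrite linearZZ bR pi_phi scaler0.
  by rewrite addr0; apply: eq_bigr => i _; rewrite linearZZ.
have /c_uniq cE := pi_v.
have u_sum : u = \sum_j c' (rshift n j) *: g j.
  by apply: phi_inj; rewrite phi_sum -vu vc' big_split_ord cE addrAC subrr add0r.
have /d_uniq dE := u_sum.
apply: functional_extensionality => k; rewrite -[k]splitK.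
by case: (split k) => [i|j]; rewrite unsplitK ?cE ?dE.
Qed.

End ExtensionBasis.

Ltac row_compute :=
  apply/rowP; let j := fresh "j" in let m := fresh "m" in let hm := fresh "hm" in
  intro j; have hm := ltn_ord j; rewrite -[j]inord_val; move: (val j) hm => m hm;
  rewrite /Vact /e2br /unit_row /e2basis !mxE /= ?inordK //; rewrite ?mxE /= ?inordK //;
  case: m hm => [|[|[|[|m]]]] hm //=;
  rewrite ?(mul1r, mulr1, mul0r, mulr0, add0r, addr0, oppr0, opprK, subr0, sub0r).

Section E2Module.
Variable C : fieldType.
Local Notation el := (e2basis C 0).

Definition Vweight (j : 'I_4) : C := if (j : nat) \in [:: 0; 3]%N then 2^-1 else - 2^-1.

Lemma Vact_el v : Vact v el = \row_j (Vweight j * v 0 j).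
Proof. by row_compute; rewrite /Vweight inordK /= ?mulNr. Qed.

Hypothesis C0 : [pchar C] =i pred0.

Lemma Vweight_neq_intr j (k : int) : Vweight j != k%:~R.
Proof.
rewrite /Vweight; case: ifP => _; first exact: half_neq_intr.
by rewrite -[k]opprK intrN eqr_opp half_neq_intr.
Qed.

Lemma Vact_el_subz_surj (k : int) c : exists v, Vact v el - k%:~R *: v = c.
Proof.
exists (\row_j (c 0 j / (Vweight j - k%:~R))); apply/rowP => j.
by rewrite Vact_el !mxE -mulrBl mulrC divfK // subr_eq0 Vweight_neq_intr.
Qed.

Lemma Vact_el_eigen_eq0 (k : int) v : Vact v el = k%:~R *: v -> v = 0.
Proof.
move/rowP=> vk; apply/rowP => j; move/eqP: (vk j).
rewrite Vact_el !mxE -subr_eq0 -mulrBl mulf_eq0 subr_eq0 (negbTE (Vweight_neq_intr _ _)).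
by move/eqP.
Qed.

End E2Module.

Section E2Extension.
Variables (C : fieldType) (L : lmodType C) (br : L -> L -> L).
Variables (pi : {linear L -> 'rV[C]_3}) (phi : {linear 'rV[C]_4 -> L}).
Hypotheses (C0 : [pchar C] =i pred0) (br_bilin : bilinear_br br) (br_leibniz : right_leibniz br).
Hypotheses (pi_surj : forall y, exists x, pi x = y)
  (ker_pi : forall x, pi x = 0 <-> exists v, x = phi v)
  (pi_br : forall x y, pi (br x y) = e2br (pi x) (pi y)).
Hypotheses (phi_inj : injective phi) (br_phi : forall x v, br x (phi v) = 0)
  (phi_Vact : forall v x, phi (Vact v (pi x)) = br (phi v) x).

Local Notation el := (e2basis C 0).
Local Notation ep := (e2basis C 1).
Local Notation em := (e2basis C 2).

Lemma pi_phi v : pi (phi v) = 0.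
Proof. by apply/ker_pi; exists v. Qed.

Lemma exists_weight_correction z x (k : int) : pi z = el -> pi (br x z - k%:~R *: x) = 0 ->
  exists v, br (x + phi v) z = k%:~R *: (x + phi v).
Proof.
move=> pi_z /ker_pi[c xc]; have [v vc] := Vact_el_subz_surj C0 k (- c).
exists v; apply/eqP; rewrite -subr_eq0 (brDl br_bilin) -phi_Vact pi_z scalerDr opprD addrACA.
by rewrite xc -linearZZ -linearB vc linearN subrr.
Qed.

Lemma exists_square_zero_lift : exists2 l, pi l = el & br l l = 0.
Proof.
have [l0 pi_l0] := pi_surj el.
have [|v l0v] := exists_weight_correction (x := l0) (k := 0) pi_l0.
  by rewrite scale0r subr0 pi_br pi_l0; row_compute.
exists (l0 + phi v); first by rewrite linearD pi_phi addr0.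
by rewrite (brDr br_bilin) br_phi addr0 l0v scale0r.
Qed.

Section Weights.
Variable l : L.
Hypotheses (pi_l : pi l = el) (br_ll : br l l = 0).

Definition has_weight (k : int) x := br x l = k%:~R *: x.

Lemma exists_weight_lift e (k : int) : e2br e el = k%:~R *: e ->
  exists2 x, pi x = e & has_weight k x.
Proof.
move=> e_k; have [x0 pi_x0] := pi_surj e.
have [|v x0v] := exists_weight_correction (x := x0) (k := k) pi_l.
  by rewrite linearB linearZZ pi_br pi_l pi_x0 e_k subrr.
by exists (x0 + phi v); first by rewrite linearD pi_phi addr0.
Qed.

Lemma ker_weight_eq0 x k : pi x = 0 -> has_weight k x -> x = 0.
Proof.
move=> /ker_pi[v ->]; rewrite /has_weight -phi_Vact pi_l -linearZZ => /phi_inj.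
by move/(Vact_el_eigen_eq0 C0)->; rewrite linear0.
Qed.

Lemma br_eq_of_weight x y z s t : has_weight s x -> has_weight t y ->
  has_weight (s + t) z -> pi (br x y) = pi z -> br x y = z.
Proof.
move=> xs yt zst pi_xyz; apply/eqP; rewrite -subr_eq0; apply/eqP.
apply: (ker_weight_eq0 (k := s + t)); first by rewrite linearB pi_xyz subrr.
by rewrite /has_weight (brBl br_bilin) (br_weight br_bilin br_leibniz xs yt) zst intrD scalerBr.
Qed.

Lemma has_weight0 k : has_weight k 0.
Proof. by rewrite /has_weight (br0l br_bilin) scaler0. Qed.

Section StandardBasis.
Variables pp pm : L.
Hypotheses (pi_pp : pi pp = ep) (pi_pm : pi pm = em).
Hypotheses (pp_weight : has_weight (-1) pp) (pm_weight : has_weight 1 pm).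

Let l_weight : has_weight 0 l. Proof. by rewrite /has_weight br_ll scale0r. Qed.

Lemma br_pp_l : br pp l = - pp. Proof. by rewrite pp_weight scaleN1r. Qed.
Lemma br_pm_l : br pm l = pm. Proof. by rewrite pm_weight scale1r. Qed.

Lemma br_l_pp : br l pp = pp.
Proof.
apply: br_eq_of_weight l_weight pp_weight _ _; first by rewrite add0r.
by rewrite pi_br pi_l pi_pp; row_compute.
Qed.

Lemma br_l_pm : br l pm = - pm.
Proof.
apply: br_eq_of_weight l_weight pm_weight _ _.
  by rewrite /has_weight (brNl br_bilin) br_pm_l add0r scale1r.
by rewrite linearN pi_br pi_l pi_pm; row_compute.
Qed.

Lemma br_pp_pp : br pp pp = 0.
Proof.
apply: br_eq_of_weight pp_weight pp_weight (has_weight0 _) _.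
by rewrite linear0 pi_br pi_pp; row_compute.
Qed.

Lemma br_pm_pm : br pm pm = 0.
Proof.
apply: br_eq_of_weight pm_weight pm_weight (has_weight0 _) _.
by rewrite linear0 pi_br pi_pm; row_compute.
Qed.

Lemma br_pp_pm : br pp pm = 0.
Proof.
apply: br_eq_of_weight pp_weight pm_weight (has_weight0 _) _.
by rewrite linear0 pi_br pi_pp pi_pm; row_compute.
Qed.

Lemma br_pm_pp : br pm pp = 0.
Proof.
apply: br_eq_of_weight pm_weight pp_weight (has_weight0 _) _.
by rewrite linear0 pi_br pi_pp pi_pm; row_compute.
Qed.

Definition std_basis (k : 'I_7) : L :=
  match nat_of_ord k with
  | 0 => l | 1 => pp | 2 => pm | k'.+3 => phi (unit_row C 4 k')
  end.

Lemma std_basis_table i j : br (std_basis i) (std_basis j) = leib_table std_basis i j.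
Proof.
rewrite /leib_table; case: i => [[|[|[|[|[|[|[|i]]]]]]] hi] //.
all: case: j => [[|[|[|[|[|[|[|j]]]]]]] hj] //=.
all: rewrite /std_basis ?inordK //= ?br_phi ?br_ll ?br_l_pp ?br_l_pm ?br_pp_l ?br_pm_l.
all: rewrite ?br_pp_pp ?br_pm_pm ?br_pp_pm ?br_pm_pp //.
all: rewrite -phi_Vact ?pi_l ?pi_pp ?pi_pm -?(linearZZ phi) -?(raddfN phi) -?(raddf0 phi).
all: by congr (phi _); row_compute.
Qed.

Lemma is_basis_std_basis : is_basis std_basis.
Proof.
apply: (is_basis_extension (n := 3) phi_inj ker_pi _ (@is_basis_unit_row C 4)) => //.
have -> : (fun i : 'I_3 => pi (std_basis (lshift 4 i))) = (fun i => unit_row C 3 i).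
  by apply: functional_extensionality => -[[|[|[|i]]] hi].
exact: is_basis_unit_row.
Qed.

Lemma std_basis_phi (k : 'I_7) : (3 <= k)%N -> exists v, std_basis k = phi v.
Proof. by case: k => [[|[|[|k]]] ?] //= _; exists (unit_row C 4 k). Qed.

Lemma std_basis_pi (k : 'I_7) : (k < 3)%N -> pi (std_basis k) = e2basis C k.
Proof. by case: k => [[|[|[|k]]] ?]. Qed.

End StandardBasis.
End Weights.

Lemma exists_std_basis : exists b : 'I_7 -> L,
  [/\ is_basis b, forall k : 'I_7, (3 <= k)%N -> exists v, b k = phi v,
      forall k : 'I_7, (k < 3)%N -> pi (b k) = e2basis C k &
      forall i j, br (b i) (b j) = leib_table b i j].
Proof.
have [l pi_l br_ll] := exists_square_zero_lift.
have [|pp pi_pp pp_weight] := exists_weight_lift pi_l (e := ep) (k := -1); first by row_compute.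
have [|pm pi_pm pm_weight] := exists_weight_lift pi_l (e := em) (k := 1); first by row_compute.
exists (std_basis l pp pm); split.
- exact: is_basis_std_basis.
- exact: std_basis_phi.
- exact: std_basis_pi.
- exact: std_basis_table.
Qed.

End E2Extension.

Local Open Scope complex_scope.

Theorem mainTheorem1 (R : realType) (L : lmodType R[i]) (br : L -> L -> L)
  (pi : {linear L -> 'rV[R[i]]_3}) (phi : {linear 'rV[R[i]]_4 -> L}) :
  bilinear_br br -> right_leibniz br ->
  (* L/I ~ e(2): pi is a surjective Lie morphism with kernel I *)
  (forall y : 'rV[R[i]]_3, exists x : L, pi x = y) ->
  (forall x : L, pi x = 0 <-> sq_ideal br x) ->
  (forall x y : L, pi (br x y) = e2br (pi x) (pi y)) ->
  (* I ~ V as right e(2)-modules: phi is injective with image I, equivariant *)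
  injective phi ->
  (forall w : L, sq_ideal br w <-> exists v, w = phi v) ->
  (forall (v : 'rV[R[i]]_4) (x : L), phi (Vact v (pi x)) = br (phi v) x) ->
  exists b : 'I_7 -> L,
    [/\ is_basis b,
        (forall k : 'I_7, (3 <= val k)%N -> sq_ideal br (b k)),
        (forall k : 'I_7, (val k < 3)%N -> pi (b k) = e2basis _ (val k)) &
        (forall i j : 'I_7, br (b i) (b j) = leib_table b i j)].
Proof.
move=> br_bilin br_leibniz pi_surj pi_ker_sq pi_br phi_inj sq_phi phi_Vact.
have ker_pi x : pi x = 0 <-> exists v, x = phi v.
  by split=> [/pi_ker_sq/sq_phi | /sq_phi/pi_ker_sq].
have br_phi x v : br x (phi v) = 0.
  by apply: (sq_ideal_annihilated br_bilin br_leibniz); apply/sq_phi; exists v.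
have [b [b_basis b_phi b_pi b_table]] := exists_std_basis (pchar_num _) br_bilin br_leibniz
  pi_surj ker_pi pi_br phi_inj br_phi phi_Vact.
by exists b; split=> // k /b_phi /sq_phi.
Qed.
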